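(* Consider the energy consumption game $\mathcal{G}^{\mathrm{DP}}_\alpha$ with daily proportional billing described in the context, for a fixed $\alpha\in[0,1]$. Then $\mathcal{G}^{\mathrm{DP}}_\alpha$ is a weighted potential game with potential $$W^{\mathrm{DP}}_\alpha(\boldsymbol{\ell})=(1-\alpha)\sum_{h\in\mathcal{H}}C_h(\ell^h)-\alpha\sum_{n\in\mathcal{N}}\frac{E}{E_n}\,u_n(\boldsymbol{\ell}_n),$$ i.e. there exist positive weights $(w_n)_{n\in\mathcal N}$ such that for every $n$, every $\boldsymbol{\ell}_{-n}\in\prod_{m\neq n}\mathcal{L}_m$ and every $\boldsymbol{\ell}_n,\boldsymbol{\ell}_n'\in\mathcal{L}_n$, $$f_n^\alpha(\boldsymbol{\ell}_n',\boldsymbol{\ell}_{-n})-f_n^\alpha(\boldsymbol{\ell}_n,\boldsymbol{\ell}_{-n})=w_n\big(W^{\mathrm{DP}}_\alpha(\boldsymbol{\ell}_n',\boldsymbol{\ell}_{-n})-W^{\mathrm{DP}}_\alpha(\boldsymbol{\ell}_n,\boldsymbol{\ell}_{-n})\big).$$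
   Context: There is a finite set of users $\mathcal{N}=\{1,\dots,N\}$ and a finite set of time periods $\mathcal{H}$. Each user $n$ chooses a load profile $\boldsymbol{\ell}_n=(\ell_n^h)_{h\in\mathcal{H}}\in\mathbb{R}^{\mathcal H}$ in the feasible set $\mathcal{L}_n=\{\boldsymbol{\ell}_n:\sum_{h}\ell_n^h=E_n,\ \underline{\ell}_n^h\le \ell_n^h\le\overline{\ell}_n^h\ \forall h\}$, where $E_n>0$ and the bounds $\underline{\ell}_n^h\le\overline{\ell}_n^h$ are given; $\mathcal L=\mathcal L_1\times\dots\times\mathcal L_N$, $\boldsymbol{\ell}_{-n}=(\boldsymbol{\ell}_m)_{m\ne n}$. Write $\ell^h=\sum_n\ell_n^h$ and $E=\sum_n E_n$. For each $h$, $C_h:\mathbb{R}\to\mathbb{R}$ is a given cost function. Each user has a preferred profile $\hat{\boldsymbol{\ell}}_n=(\hat\ell_n^h)_h$, a weight $\omega_n>0$ and utility $u_n(\boldsymbol{\ell}_n)=-\omega_n\sum_h(\ell_n^h-\hat\ell_n^h)^2$. The daily proportional (DP) bill of user $n$ is $b_n^{\mathrm{DP}}(\boldsymbol{\ell})=\frac{E_n}{E}\sum_{h}C_h(\ell^h)$, and user $n$'s cost is $f_n^\alpha(\boldsymbol{\ell}_n,\boldsymbol{\ell}_{-n})=(1-\alpha)b_n^{\mathrm{DP}}(\boldsymbol{\ell})-\alpha u_n(\boldsymbol{\ell}_n)$, which user $n$ minimizes over $\mathcal L_n$. The game $\mathcal{G}^{\mathrm{DP}}_\alpha$ has players $\mathcal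 N$, strategy sets $\mathcal L_n$ and costs $f_n^\alpha$. *)

From mathcomp Require Import all_boot all_order all_algebra.
Set Implicit Arguments. Unset Strict Implicit. Unset Printing Implicit Defensive.
Import Order.TTheory GRing.Theory Num.Theory.
Local Open Scope ring_scope.

Section DP.
Variables (R : realFieldType) (N : nat) (H : finType).

(* A (joint) load profile: user n's load in period h. *)
Definition profile := 'I_N -> H -> R.

Definition feasible (E : 'I_N -> R) (lo hi : 'I_N -> H -> R)
  (n : 'I_N) (ln : H -> R) : Prop :=
  \sum_(h : H) ln h = E n /\ forall h, lo n h <= ln h <= hi n h.

Definition upd (ell : profile) (n : 'I_N) (ln : H -> R) : profile :=
  fun m => if m == n then ln else ell m.

Definition total_load (ell : profile) (h : H) : R := \sum_(m < N) ell m h.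

Definition Etot (E : 'I_N -> R) : R := \sum_(m < N) E m.

Definition utility (omega : 'I_N -> R) (lhat : 'I_N -> H -> R)
  (n : 'I_N) (ln : H -> R) : R :=
  - omega n * \sum_(h : H) (ln h - lhat n h) ^+ 2.

Definition bill_DP (C : H -> R -> R) (E : 'I_N -> R) (n : 'I_N) (ell : profile) : R :=
  E n / Etot E * \sum_(h : H) C h (total_load ell h).

Definition cost_DP (alpha : R) (C : H -> R -> R) (E : 'I_N -> R)
  (omega : 'I_N -> R) (lhat : 'I_N -> H -> R) (n : 'I_N) (ell : profile) : R :=
  (1 - alpha) * bill_DP C E n ell - alpha * utility omega lhat n (ell n).

Definition potential_DP (alpha : R) (C : H -> R -> R) (E : 'I_N -> R)
  (omega : 'I_N -> R) (lhat : 'I_N -> H -> R) (ell : profile) : R :=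
  (1 - alpha) * \sum_(h : H) C h (total_load ell h)
  - alpha * \sum_(m < N) Etot E / E m * utility omega lhat m (ell m).

End DP.

(** The DP bill of user [n] is the common total cost scaled by the share
    [E n / E], and the potential's utility term for [n] is [u_n] scaled by the
    inverse share [E / E n].  A unilateral deviation of [n] changes only the
    [n]-th utility term of the potential, so both sides of the identity differ
    by the factor [E n / E], which is the weight. *)
From mathcomp Require Import all_boot all_order all_algebra ring.
Set Implicit Arguments. Unset Strict Implicit. Unset Printing Implicit Defensive.
Import Order.TTheory GRing.Theory Num.Theory.
Local Open Scope ring_scope.

Section WeightedPotential.
Variables (R : realFieldType) (N : nat) (H : finType).
Implicit Types (ell : profile R N H) (n : 'I_N) (x y : H -> R).

Lemma upd_same ell n x : upd ell n x n = x.
Proof. by rewrite /upd eqxx. Qed.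

Lemma upd_other ell n x m : m != n -> upd ell n x m = ell m.
Proof. by rewrite /upd => /negbTE ->. Qed.

Lemma sumr_upd (F : 'I_N -> (H -> R) -> R) ell n x :
  \sum_(m < N) F m (upd ell n x m)
  = F n x + \sum_(m < N | m != n) F m (ell m).
Proof.
rewrite (bigD1 n) //= upd_same; congr (_ + _).
by apply: eq_bigr => m nm; rewrite upd_other.
Qed.

Lemma sumr_upd_diff (F : 'I_N -> (H -> R) -> R) ell n x y :
  \sum_(m < N) F m (upd ell n x m) - \sum_(m < N) F m (upd ell n y m)
  = F n x - F n y.
Proof. by rewrite !sumr_upd opprD addrACA subrr addr0. Qed.

Lemma Etot_gt0 (E : 'I_N -> R) n : (forall m, 0 < E m) -> 0 < Etot E.
Proof.
move=> E_gt0; rewrite /Etot (bigD1 n) //= ltr_wpDr //.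
by apply: sumr_ge0 => m _; apply: ltW.
Qed.

Variables (alpha : R) (C : H -> R -> R) (E : 'I_N -> R).
Variables (omega : 'I_N -> R) (lhat : 'I_N -> H -> R).

Let total_cost ell := \sum_(h : H) C h (total_load ell h).
Let u := utility omega lhat.

Lemma cost_DP_upd_diff ell n x y :
  cost_DP alpha C E omega lhat n (upd ell n x)
    - cost_DP alpha C E omega lhat n (upd ell n y)
  = (1 - alpha) * (E n / Etot E)
      * (total_cost (upd ell n x) - total_cost (upd ell n y))
    - alpha * (u n x - u n y).
Proof. by rewrite /cost_DP /bill_DP !upd_same /total_cost /u; ring. Qed.

Lemma potential_DP_upd_diff ell n x y :
  potential_DP alpha C E omega lhat (upd ell n x)
    - potential_DP alpha C E omega lhat (upd ell n y)
  = (1 - alpha) * (total_cost (upd ell n x) - total_cost (upd ell n y))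
    - alpha * (Etot E / E n * (u n x - u n y)).
Proof.
have -> : Etot E / E n * (u n x - u n y)
          = \sum_(m < N) Etot E / E m * u m (upd ell n x m)
            - \sum_(m < N) Etot E / E m * u m (upd ell n y m).
  by rewrite (sumr_upd_diff (fun m z => Etot E / E m * u m z)) mulrBr.
by rewrite /potential_DP /total_cost /u; ring.
Qed.

Lemma cost_DP_weighted_potential ell n x y :
  E n != 0 -> Etot E != 0 ->
  cost_DP alpha C E omega lhat n (upd ell n x)
    - cost_DP alpha C E omega lhat n (upd ell n y)
  = E n / Etot E * (potential_DP alpha C E omega lhat (upd ell n x)
                    - potential_DP alpha C E omega lhat (upd ell n y)).
Proof.
move=> En_neq0 Etot_neq0.
rewrite cost_DP_upd_diff potential_DP_upd_diff.
by field; rewrite En_neq0 Etot_neq0.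
Qed.

End WeightedPotential.

Theorem theorem1 (R : realFieldType) (N : nat) (H : finType)
  (E : 'I_N -> R) (lo hi : 'I_N -> H -> R) (C : H -> R -> R)
  (lhat : 'I_N -> H -> R) (omega : 'I_N -> R) (alpha : R)
  (hE : forall n, 0 < E n) (hlohi : forall n h, lo n h <= hi n h)
  (homega : forall n, 0 < omega n) (halpha : 0 <= alpha <= 1) :
  exists w : 'I_N -> R, (forall n, 0 < w n) /\
    forall (n : 'I_N) (ell : profile R N H) (ln ln' : H -> R),
      (forall m, m != n -> feasible E lo hi m (ell m)) ->
      feasible E lo hi n ln -> feasible E lo hi n ln' ->
      cost_DP alpha C E omega lhat n (upd ell n ln')
        - cost_DP alpha C E omega lhat n (upd ell n ln)
      = w n * (potential_DP alpha C E omega lhat (upd ell n ln')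
               - potential_DP alpha C E omega lhat (upd ell n ln)).
Proof.
exists (fun n => E n / Etot E); split.
  by move=> n; rewrite divr_gt0 // (Etot_gt0 n hE).
move=> n ell ln ln' _ _ _.
apply: cost_DP_weighted_potential; apply: lt0r_neq0 => //.
exact: Etot_gt0 n hE.
Qed.
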